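(* $\pi_{C_5}(K_3)\le \frac{24}{625}$. Equivalently, $$\lim_{n\to\infty}\frac{\mathrm{ex}_{C_5}(n,\{K_3\})}{\binom{n}{5}}\le \frac{24}{625}.$$
   Context: All graphs are simple. For a graph $G$ on $n$ vertices and a graph $A$ on $k$ vertices, let $C_A(G)$ be the set of $k$-element subsets of $V(G)$ that induce a copy of $A$ in $G$. The $A$-density of $G$ is $d_A(G)=|C_A(G)|/\binom{n}{k}$. For a family $\mathcal{F}$ of forbidden graphs, set $$\mathrm{ex}_A(n,\mathcal{F})=\max\{|C_A(G)| : G \text{ is } \mathcal{F}\text{-free},\ |V(G)|=n\},$$ where $\mathcal{F}$-free means containing no member of $\mathcal{F}$ as a subgraph. The Turán density is $\pi_A(\mathcal{F})=\lim_{n\to\infty}\mathrm{ex}_A(n,\mathcal{F})/\binom{n}{k}$; this limit exists. Here $A=C_5$ is the 5-cycle and $\mathcal{F}=\{K_3\}$. So $\pi_{C_5}(K_3)$ is the limit, as $n\to\infty$, of the maximum over triangle-free $n$-vertex graphs $G$ of the number of 5-vertex subsets inducing a $5$-cycle, divided by $\binom{n}{5}$. *)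

From mathcomp Require Import all_boot all_order all_algebra.
Set Implicit Arguments. Unset Strict Implicit. Unset Printing Implicit Defensive.

Definition graph (n : nat) := {ffun 'I_n -> {ffun 'I_n -> bool}}.

Definition simple_graph n (g : graph n) : bool :=
  [forall x, ~~ g x x] && [forall x, forall y, g x y == g y x].

Definition triangle_free n (g : graph n) : bool :=
  [forall x, forall y, forall z, ~~ [&& g x y, g y z & g x z]].

Definition c5adj (i j : 'I_5) : bool :=
  (val j == (val i).+1 %% 5) || (val i == (val j).+1 %% 5).

Definition induces_C5 n (g : graph n) (S : {set 'I_n}) : bool :=
  [exists f : {ffun 'I_5 -> 'I_n},
     [&& injectiveb f, f @: setT == S &
         [forall i, forall j, g (f i) (f j) == c5adj i j]]].

Definition C_C5 n (g : graph n) : {set {set 'I_n}} :=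
  [set S : {set 'I_n} | (#|S| == 5) && induces_C5 g S].

Definition ex_C5_K3 (n : nat) : nat :=
  \max_(g : graph n | simple_graph g && triangle_free g) #|C_C5 g|.

From mathcomp Require Import all_boot all_order all_algebra.
From mathcomp Require Import zify ssrZ lra.
From Stdlib Require Import BinInt FunctionalExtensionality.
Import Order.TTheory GRing.Theory Num.Theory.

(* BinInt rebinds %N to binary naturals; %N means nat again from here on. *)
Delimit Scope nat_scope with N.
Local Open Scope ring_scope.

(* A flag-algebra certificate.  For an injective labelling f of five vertices of a
   graph put

     w(f) = c * (2 - 625 [f 0, f 1, f 2, f 3, f 4 is an induced cycle in this order])
            - sum_q w_q * v_q(f 0, f 1, f 2; f 3) * v_q(f 0, f 1, f 2; f 4),

   with c = cert_scale, w_q >= 0 and v_q(roots; x) depending only on the graph induced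
   by the three roots and on the neighbours of x among them. A computation over the
   2^10 graphs on five vertices shows that the average of w over the 120 relabellings
   of any triangle-free graph is nonnegative, so the sum of w over all labellings of a
   triangle-free graph G is nonnegative. For fixed roots the quadratic part, summed
   over the pairs x <> y of further vertices, is a square minus its diagonal, so in
   total it is at least -O(n^4). Since every induced C5 is hit by exactly 10 cyclic
   labellings, 6250 #C5(G) <= 2 n(n-1)(n-2)(n-3)(n-4) + O(n^4) = 240 C(n,5) + O(n^4). *)

Lemma sum_distinct_products_ge (R : realDomainType) (I : finType) (P : pred I) (a : I -> R) :
  - \sum_i a i ^+ 2 <= \sum_(i | P i) \sum_(j | P j && (j != i)) a i * a j.
Proof.
have rowE i : P i ->
    \sum_(j | P j && (j != i)) a i * a j = a i * \sum_(j | P j) a j - a i ^+ 2.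
  by move=> Pi; rewrite (bigD1 i Pi) /= mulrDr expr2 addrAC subrr add0r mulr_sumr.
rewrite (eq_bigr _ rowE) sumrB -mulr_suml -expr2.
have partial : \sum_(i | P i) a i ^+ 2 <= \sum_i a i ^+ 2.
  by rewrite [leRHS](bigID P) /= lerDl sumr_ge0 // => i _; rewrite sqr_ge0.
apply: le_trans (_ : - \sum_(i | P i) a i ^+ 2 <= _); first by rewrite lerN2.
by rewrite lerDr sqr_ge0.
Qed.

Lemma sum_ord_le_mulrn (R : numDomainType) m (F : 'I_m -> R) y :
  (forall i, F i <= y) -> \sum_i F i <= y *+ m.
Proof. by move=> Fle; rewrite -[m in y *+ m]card_ord -sumr_const ler_sum. Qed.

Definition o0 : 'I_5 := @Ordinal 5 0 isT.
Definition o1 : 'I_5 := @Ordinal 5 1 isT.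
Definition o2 : 'I_5 := @Ordinal 5 2 isT.
Definition o3 : 'I_5 := @Ordinal 5 3 isT.
Definition o4 : 'I_5 := @Ordinal 5 4 isT.
Definition ords5 : seq 'I_5 := [:: o0; o1; o2; o3; o4].

Lemma enum_ord5 : enum 'I_5 = ords5.
Proof. by apply: (inj_map val_inj); rewrite val_enum_ord. Qed.

Lemma mem_ords5 (i : 'I_5) : i \in ords5.
Proof. by rewrite -enum_ord5 mem_enum. Qed.

Lemma ord5_ind (P : 'I_5 -> Prop) : P o0 -> P o1 -> P o2 -> P o3 -> P o4 -> forall i, P i.
Proof.
by move=> ? ? ? ? ? i; have := mem_ords5 i; rewrite !inE => /orP[/eqP->|/or4P[]/eqP->].
Qed.

Section InjectiveLabellings.
Variable n : nat.

Definition tuple5 (x0 x1 x2 x3 x4 : 'I_n) : {ffun 'I_5 -> 'I_n} :=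
  [ffun i : 'I_5 => nth x0 [:: x0; x1; x2; x3; x4] i].

Lemma injectiveb_tuple5 x0 x1 x2 x3 x4 :
  injectiveb (tuple5 x0 x1 x2 x3 x4) = uniq [:: x0; x1; x2; x3; x4].
Proof. by rewrite /injectiveb /dinjectiveb enum_ord5 /= !ffunE. Qed.

Lemma sum_injective_ffun5 (V : nmodType) (G : {ffun 'I_5 -> 'I_n} -> V) :
  \sum_(f : {ffun 'I_5 -> 'I_n} | injectiveb f) G f =
  \sum_x0 \sum_x1 \sum_x2 \sum_x3 \sum_(x4 | uniq [:: x0; x1; x2; x3; x4])
     G (tuple5 x0 x1 x2 x3 x4).
Proof.
pose h (x : 'I_n * 'I_n * 'I_n * 'I_n * 'I_n) :=
  tuple5 x.1.1.1.1 x.1.1.1.2 x.1.1.2 x.1.2 x.2.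
have h_bij : bijective h.
  exists (fun f : {ffun 'I_5 -> 'I_n} => (f o0, f o1, f o2, f o3, f o4)).
    by case=> [[[[x0 x1] x2] x3] x4]; rewrite /h /= !ffunE.
  by move=> f; apply/ffunP => i; rewrite /h /= ffunE; elim/ord5_ind: i.
rewrite (reindex h) /=; last exact: onW_bij.
under [RHS]eq_bigr => x0 _ do under eq_bigr => x1 _ do
  under eq_bigr => x2 _ do under eq_bigr => x3 _ do rewrite big_mkcond.
rewrite big_mkcond !pair_bigA; apply: eq_bigr => -[[[[x0 x1] x2] x3] x4] _.
by rewrite /h /= injectiveb_tuple5.
Qed.

Lemma sum_injective_const (V : nmodType) (x : V) :
  \sum_(f : {ffun 'I_5 -> 'I_n} | injectiveb f) x = x *+ n ^_ 5.
Proof. by rewrite sumr_const -cardsE card_inj_ffuns !card_ord. Qed.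

Lemma sum_labelled_products_ge (R : realDomainType)
    (Psi : 'I_n -> 'I_n -> 'I_n -> 'I_n -> R) :
  - \sum_x0 \sum_x1 \sum_x2 \sum_y Psi x0 x1 x2 y ^+ 2 <=
  \sum_(f : {ffun 'I_5 -> 'I_n} | injectiveb f)
     Psi (f o0) (f o1) (f o2) (f o3) * Psi (f o0) (f o1) (f o2) (f o4).
Proof.
rewrite sum_injective_ffun5 -!sumrN; apply: ler_sum => x0 _.
rewrite -sumrN; apply: ler_sum => x1 _; rewrite -sumrN; apply: ler_sum => x2 _.
set th := [:: x0; x1; x2].
have uniqE x3 x4 : uniq [:: x0; x1; x2; x3; x4] =
    [&& uniq th, x3 \notin th, x4 \notin th & x4 != x3].
  rewrite -[[:: _; _; _; _; _]]/(rcons (rcons th x3) x4) !rcons_uniq mem_rcons in_cons.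
  by case: (uniq th); case: (x3 \in th); case: (x4 \in th); case: (x4 == x3).
under [X in _ <= X]eq_bigr => x3 _ do
  under eq_big => [x4|x4 _] do [rewrite uniqE|rewrite !ffunE].
set a := Psi x0 x1 x2.
case: (uniq th) => /=; last first.
  rewrite [X in _ <= X]big1 => [|x3 _]; last by rewrite big_pred0_eq.
  by rewrite oppr_le0 sumr_ge0 // => y _; rewrite sqr_ge0.
rewrite [X in _ <= X](bigID (fun x3 => x3 \notin th)) /= [X in _ + X]big1 ?addr0;
  last by move=> x3 /negPn x3th; rewrite big_pred0 // => x4; rewrite x3th.
rewrite [X in _ <= X](eq_bigr (fun x3 => \sum_(x4 | (x4 \notin th) && (x4 != x3)) a x3 * a x4));
  last by move=> x3 x3th; apply: eq_bigl => x4; rewrite x3th.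
exact: sum_distinct_products_ge.
Qed.

End InjectiveLabellings.

Section SimpleGraphs.
Variables (n : nat) (g : graph n).

Lemma simple_graph_irrefl x : simple_graph g -> g x x = false.
Proof. by case/andP=> /forallP/(_ x)/negbTE. Qed.

Lemma simple_graph_sym x y : simple_graph g -> g x y = g y x.
Proof. by case/andP=> _ /forallP/(_ x)/forallP/(_ y)/eqP. Qed.

Lemma triangle_free_no_triangle x y z : triangle_free g -> ~~ [&& g x y, g y z & g x z].
Proof. by move=> /forallP/(_ x)/forallP/(_ y)/forallP/(_ z). Qed.

End SimpleGraphs.

Definition pattern := 'I_5 -> 'I_5 -> bool.

Definition relabel (p : pattern) (sigma : 'I_5 -> 'I_5) : pattern :=
  fun i j => p (sigma i) (sigma j).

Definition relabeling (s : seq 'I_5) (i : 'I_5) : 'I_5 := nth o0 s i.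

Definition is_C5_pattern (p : pattern) : bool :=
  all (fun i => all (fun j => p i j == c5adj i j) ords5) ords5.

Definition C5_automorphisms : seq (seq 'I_5) :=
  [seq s <- permutations ords5 | is_C5_pattern (relabel c5adj (relabeling s))].

Lemma size_C5_automorphisms : size C5_automorphisms = 10%N.
Proof. by vm_compute. Qed.

Definition triangle_free_pattern (p : pattern) : bool :=
  all (fun i => all (fun j => all (fun k => ~~ [&& p i j, p j k & p i k]) ords5) ords5) ords5.

Lemma relabeling_inj (s : seq 'I_5) : perm_eq s ords5 -> injective (relabeling s).
Proof.
move=> s_perm i j /eqP; rewrite /relabeling nth_uniq ?(perm_size s_perm) ?ltn_ord //.
  by move/eqP; apply: val_inj.
by rewrite (perm_uniq s_perm).
Qed.

Lemma big_foldr_add (V : nmodType) (T : Type) (r : seq T) (F : T -> V) :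
  \sum_(x <- r) F x = foldr (fun x acc => F x + acc) 0 r.
Proof. by elim: r => [|x r IHr]; rewrite ?big_nil // big_cons IHr. Qed.

(* The sum-of-squares part of the certificate: weights w_q with sparse vectors v_q
   indexed by flag_code.  Only the root graphs with no edge, with the edge o0 o1 and
   with the path o1 o0 o2 occur; the average over relabellings supplies the others. *)
Definition sos_vectors : seq (Z * seq (nat * Z)) := [::
  (4337820676157386376630989574950322718285120%Z, [:: (0, (-318)%Z); (8, 609%Z); (16, 609%Z); (24, (-1558)%Z); (32, 1717%Z); (40, (-450)%Z); (48, (-450)%Z); (56, 477%Z)]);
  (310933489606262678455890460222832172000%Z, [:: (0, 26326%Z); (8, (-38171)%Z); (16, (-187550)%Z); (24, (-13163)%Z); (40, 174387%Z); (48, 25008%Z); (56, (-39489)%Z)]);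
  (232939310132620740966736683756495634400%Z, [:: (0, 26326%Z); (8, (-212558)%Z); (16, (-13163)%Z); (24, (-13163)%Z); (48, 199395%Z); (56, (-39489)%Z)]);
  (64231040883124533517198959213231061936062277120%Z, [:: (0, (-2)%Z); (8, 1%Z); (16, 1%Z); (24, 1%Z); (56, 3%Z)]);
  (575582542578225070222210904187766932557616%Z, [:: (1, (-4752)%Z); (9, 6470%Z); (17, 2282%Z); (33, 1950%Z); (41, (-2125)%Z); (49, (-1875)%Z)]);
  (252144527782287479423252672901884256%Z, [:: (1, (-4862119)%Z); (17, 9130994%Z); (33, 2041650%Z); (41, (-1820500)%Z); (49, (-2448375)%Z)]);
  (104358861333452390701909848368400%Z, [:: (1, (-218880478)%Z); (33, 586213430%Z); (41, 109091839%Z); (49, 109788639%Z)]);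
  (394955839000715367415861989%Z, [:: (1, (-2323664003)%Z); (41, 482535029280%Z); (49, (-480211365277)%Z)]);
  (767393530191653986864862747411867196119620193619%Z, [:: (1, (-1)%Z); (49, 1%Z)]);
  (1301346202847215912989296872485096815485536%Z, [:: (3, 2304%Z); (11, (-783)%Z); (19, 8585%Z); (35, (-6650)%Z); (51, (-369)%Z)]);
  (27670437354023923202310363819101275680%Z, [:: (3, 1402684%Z); (11, (-474413)%Z); (35, 1175755%Z); (51, (-226929)%Z)]);
  (1554577307164990107498674893982769327270755235456%Z, [:: (3, (-2)%Z); (11, (-1)%Z); (51, 2%Z)])].

Definition cert_scale : Z := 536258743269280733424629455213658695725279674880%Z.

Definition flag_index (e01 e02 e12 a0 a1 a2 : bool) : nat :=
  e01 + 2 * e02 + 4 * e12 + 8 * a0 + 16 * a1 + 32 * a2.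

Definition flag_code (p : pattern) (v : 'I_5) : nat :=
  flag_index (p o0 o1) (p o0 o2) (p o1 o2) (p v o0) (p v o1) (p v o2).

Definition coord (v : seq (nat * Z)) (k : nat) : Z :=
  foldr (fun e acc => if e.1 == k then e.2 else acc) 0 v.

Definition sos_form (k l : nat) : Z :=
  foldr (fun q acc => q.1 * (coord q.2 k * coord q.2 l) + acc) 0 sos_vectors.

Definition max_sq (v : seq (nat * Z)) : Z := foldr (fun e m => Z.max (e.2 * e.2) m) 0 v.

Definition sos_diag_bound : Z :=
  foldr (fun q acc => q.1 * max_sq q.2 + acc) 0 sos_vectors.

Lemma coord_sq_le v k : coord v k ^+ 2 <= max_sq v.
Proof.
elim: v => [|e v IHv] //=; move/Z.leb_le: IHv => IHv; apply/Z.leb_le.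
by case: (e.1 == k); lia.
Qed.

Lemma sos_weights_ge0 : all (fun q => 0 <= q.1) sos_vectors.
Proof. by vm_compute. Qed.

Lemma sos_diag_bound_le : sos_diag_bound <= (cert_scale * 1000)%Z.
Proof. by vm_compute. Qed.

Definition cert_weight (p : pattern) : Z :=
  (cert_scale * 2)%Z - (if is_C5_pattern p then (cert_scale * 625)%Z else 0)
  - sos_form (flag_code p o3) (flag_code p o4).

Definition sym_weight (p : pattern) : Z :=
  foldr (fun s acc => cert_weight (relabel p (relabeling s)) + acc) 0
    (permutations ords5).

Definition graph5_of_bits (b01 b02 b03 b04 b12 b13 b14 b23 b24 b34 : bool) : pattern :=
  fun i j => (match val i, val j with
  | 0, 1 | 1, 0 => b01 | 0, 2 | 2, 0 => b02 | 0, 3 | 3, 0 => b03 | 0, 4 | 4, 0 => b04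
  | 1, 2 | 2, 1 => b12 | 1, 3 | 3, 1 => b13 | 1, 4 | 4, 1 => b14
  | 2, 3 | 3, 2 => b23 | 2, 4 | 4, 2 => b24 | 3, 4 | 4, 3 => b34 | _, _ => false
  end)%N.

Definition allb (P : bool -> bool) : bool := P true && P false.

Lemma allbE b (P : bool -> bool) : allb P -> P b.
Proof. by case: b => /andP[]. Qed.

(* The [if] keeps vm_compute from evaluating sym_weight on graphs with a triangle. *)
Definition certificate_ok : bool :=
  allb (fun b01 => allb (fun b02 => allb (fun b03 => allb (fun b04 => allb (fun b12 =>
  allb (fun b13 => allb (fun b14 => allb (fun b23 => allb (fun b24 => allb (fun b34 =>
    let p := graph5_of_bits b01 b02 b03 b04 b12 b13 b14 b23 b24 b34 in
    if triangle_free_pattern p then Z.leb 0 (sym_weight p) else true)))))))))).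

Lemma certificate_okT : certificate_ok.
Proof. by vm_compute. Qed.

Lemma sym_weight_ge0 (p : pattern) :
  (forall i, p i i = false) -> (forall i j, p i j = p j i) ->
  (forall i j k, ~~ [&& p i j, p j k & p i k]) -> 0 <= sym_weight p.
Proof.
move=> p_irr p_sym p_tri.
have p_bits : p = graph5_of_bits (p o0 o1) (p o0 o2) (p o0 o3) (p o0 o4) (p o1 o2)
                                 (p o1 o3) (p o1 o4) (p o2 o3) (p o2 o4) (p o3 o4).
  apply: functional_extensionality => i; apply: functional_extensionality => j.
  by elim/ord5_ind: i; elim/ord5_ind: j; rewrite /graph5_of_bits /= ?p_irr // p_sym.
have := certificate_okT.
move=> /(allbE (p o0 o1)) /(allbE (p o0 o2)) /(allbE (p o0 o3)) /(allbE (p o0 o4)).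
move=> /(allbE (p o1 o2)) /(allbE (p o1 o3)) /(allbE (p o1 o4)) /(allbE (p o2 o3)).
move=> /(allbE (p o2 o4)) /(allbE (p o3 o4)) /=.
have p_tf : triangle_free_pattern p.
  by do 3! (apply/allP => ? _); apply: p_tri.
by rewrite -p_bits p_tf.
Qed.

Section GraphLabellings.
Variables (n : nat) (g : graph n).

Definition label_pattern (f : {ffun 'I_5 -> 'I_n}) : pattern := fun i j => g (f i) (f j).

Definition labelled_C5s : {set {ffun 'I_5 -> 'I_n}} :=
  [set f : {ffun 'I_5 -> 'I_n} | injectiveb f && is_C5_pattern (label_pattern f)].

Lemma sum_relabel (V : nmodType) (F : pattern -> V) (sigma : 'I_5 -> 'I_5) :
  injective sigma ->
  \sum_(f : {ffun 'I_5 -> 'I_n} | injectiveb f) F (relabel (label_pattern f) sigma) =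
  \sum_(f : {ffun 'I_5 -> 'I_n} | injectiveb f) F (label_pattern f).
Proof.
move=> sigma_inj; have [sigma' sigmaK sigmaK'] := injF_bij sigma_inj.
pose h (f : {ffun 'I_5 -> 'I_n}) := [ffun i => f (sigma i)].
have h_inj : injective h.
  move=> f1 f2 /ffunP h12; apply/ffunP => i.
  by have := h12 (sigma' i); rewrite !ffunE sigmaK'.
rewrite [RHS](reindex_inj h_inj); apply: eq_big => f.
  apply/injectiveP/injectiveP => f_inj x y.
    by rewrite !ffunE => /f_inj /sigma_inj.
  move=> fxy; rewrite -[x]sigmaK' -[y]sigmaK' (f_inj (sigma' x) (sigma' y)) //.
  by rewrite !ffunE !sigmaK'.
by move=> _; congr F; apply: functional_extensionality => i;
  apply: functional_extensionality => j; rewrite /relabel /label_pattern !ffunE.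
Qed.

Lemma sum_sos_form_ge :
  - (sos_diag_bound *+ n ^ 4) <= \sum_(f : {ffun 'I_5 -> 'I_n} | injectiveb f)
     sos_form (flag_code (label_pattern f) o3) (flag_code (label_pattern f) o4).
Proof.
under eq_bigr => f _ do rewrite /sos_form -big_foldr_add.
rewrite exchange_big /sos_diag_bound -big_foldr_add -sumrMnl -sumrN big_seq [leRHS]big_seq.
apply: ler_sum => q q_in; have q_ge0 : 0 <= q.1 := allP sos_weights_ge0 q q_in.
rewrite -mulr_sumr -mulrnAr -mulrN ler_wpM2l //.
pose Psi x0 x1 x2 y :=
  coord q.2 (flag_index (g x0 x1) (g x0 x2) (g x1 x2) (g y x0) (g y x1) (g y x2)).
rewrite (eq_bigr (fun f : {ffun 'I_5 -> 'I_n} =>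
  Psi (f o0) (f o1) (f o2) (f o3) * Psi (f o0) (f o1) (f o2) (f o4))) //.
apply: le_trans _ (@sum_labelled_products_ge n _ Psi); rewrite lerN2.
rewrite (_ : n ^ 4 = n * n * n * n)%N; last by rewrite !expnS expn0 muln1 !mulnA.
rewrite !mulrnA; do 4! apply: sum_ord_le_mulrn => ?.
exact: coord_sq_le.
Qed.

Hypothesis g_simple : simple_graph g.
Hypothesis g_triangle_free : triangle_free g.

Lemma sum_cert_weight_ge0 :
  0 <= \sum_(f : {ffun 'I_5 -> 'I_n} | injectiveb f) cert_weight (label_pattern f).
Proof.
have perms_gt0 : (0 < size (permutations ords5))%N by rewrite size_permutations.
rewrite -(pmulrn_lge0 _ perms_gt0) -iter_addr_0 -count_predT -big_const_seq /=.
rewrite (eq_big_seq (fun s => \sum_(f : {ffun 'I_5 -> 'I_n} | injectiveb f)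
                     cert_weight (relabel (label_pattern f) (relabeling s)))); last first.
  by move=> s; rewrite mem_permutations => /relabeling_inj/sum_relabel ->.
rewrite exchange_big sumr_ge0 // => f _; rewrite big_foldr_add.
apply: (sym_weight_ge0 (label_pattern f)) => [i|i j|i j k]; rewrite /label_pattern.
- exact: simple_graph_irrefl.
- exact: simple_graph_sym.
- exact: triangle_free_no_triangle.
Qed.

Lemma sum_cert_weightE :
  \sum_(f : {ffun 'I_5 -> 'I_n} | injectiveb f) cert_weight (label_pattern f) =
  (cert_scale * 2)%Z *+ n ^_ 5 - (cert_scale * 625)%Z *+ #|labelled_C5s|
  - \sum_(f : {ffun 'I_5 -> 'I_n} | injectiveb f)
      sos_form (flag_code (label_pattern f) o3) (flag_code (label_pattern f) o4).
Proof.
rewrite !sumrB sum_injective_const -big_mkcondr -sumr_const.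
by congr (_ - _ - _); apply: eq_bigl => f; rewrite /labelled_C5s inE.
Qed.

Lemma labelled_C5_count_le : (625 * #|labelled_C5s| <= 2 * n ^_ 5 + 1000 * n ^ 4)%N.
Proof.
have mulrnZ (x : Z) k : x *+ k = (x * Z.of_nat k)%Z.
  by rewrite -mulr_natr -[in RHS](natn k) rmorph_nat.
have := sum_cert_weight_ge0; rewrite sum_cert_weightE.
have := sum_sos_form_ge; have := sos_diag_bound_le.
set S := \sum_(f | _) _; set D := sos_diag_bound.
set N5 := n ^_ 5; set n4 := (n ^ 4)%N; set L := #|labelled_C5s|.
clearbody S D N5 n4 L; rewrite !mulrnZ => /Z.leb_le diag /Z.leb_le sos /Z.leb_le weight.
have n4_ge0 : (0 <= Z.of_nat n4)%Z by lia.
have := Z.mul_le_mono_nonneg_r _ _ _ n4_ge0 diag.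
(* With cert_scale unfolded to a literal every remaining inequality is linear. *)
rewrite /cert_scale in weight *; lia.
Qed.

Lemma labelled_C5s_onto_ge (S : {set 'I_n}) : S \in C_C5 g ->
  (10 <= #|[set f in labelled_C5s | f @: setT == S]|)%N.
Proof.
rewrite inE => /andP[_ /existsP[f0 /and3P[/injectiveP f0_inj /eqP f0_im /forallP f0_adj]]].
pose h (s : seq 'I_5) : {ffun 'I_5 -> 'I_n} := [ffun i => f0 (relabeling s i)].
have aut_perm s : s \in C5_automorphisms -> perm_eq s ords5.
  by rewrite mem_filter mem_permutations => /andP[].
have h_inj : {in C5_automorphisms &, injective h}.
  move=> s t /aut_perm s_perm /aut_perm t_perm /ffunP hst.
  apply: (@eq_from_nth _ o0); first by rewrite (perm_size s_perm) (perm_size t_perm).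
  move=> k; rewrite (perm_size s_perm) => k_lt5.
  by have := hst (Ordinal k_lt5); rewrite !ffunE => /f0_inj.
rewrite -size_C5_automorphisms -(size_map h) cardE.
apply: uniq_leq_size => [|_ /mapP[s s_aut ->]].
  by rewrite (map_inj_in_uniq h_inj) filter_uniq ?permutations_uniq.
have s_inj : injective (relabeling s) by apply/relabeling_inj/aut_perm.
have [sigma' sigmaK _] := injF_bij s_inj.
have h_pattern : label_pattern (h s) = relabel c5adj (relabeling s).
  apply: functional_extensionality => i; apply: functional_extensionality => j.
  by rewrite /label_pattern !ffunE; apply/eqP/(forallP (f0_adj _)).
rewrite mem_enum /labelled_C5s !inE h_pattern -andbA; apply/and3P; split.
- by apply/injectiveP => x y; rewrite !ffunE => /f0_inj /s_inj.
- by move: s_aut; rewrite mem_filter => /andP[].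
- apply/eqP; rewrite -f0_im (eq_imset _ (fun i => ffunE _ i)) imset_comp.
  by rewrite (can_imset_pre _ sigmaK) preimsetT.
Qed.

Lemma C5_count_le_labelled : (10 * #|C_C5 g| <= #|labelled_C5s|)%N.
Proof.
rewrite -[X in (_ <= X)%N]sum1_card.
rewrite (partition_big (fun f : {ffun 'I_5 -> 'I_n} => f @: setT) predT) //=.
rewrite (bigID (mem (C_C5 g))) /= -[X in (X <= _)%N]addn0 leq_add //.
rewrite mulnC -sum_nat_const; apply: leq_sum => S S_C5.
by rewrite sum1dep_card; apply: labelled_C5s_onto_ge.
Qed.

Lemma C5_count_le : (625 * #|C_C5 g| <= 24 * 'C(n, 5) + 100 * n ^ 4)%N.
Proof.
have := C5_count_le_labelled; have := labelled_C5_count_le.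
rewrite -(bin_ffact n 5) (_ : 5`! = 120)%N //; lia.
Qed.

End GraphLabellings.

Lemma ex_C5_K3_le n : (625 * ex_C5_K3 n <= 24 * 'C(n, 5) + 100 * n ^ 4)%N.
Proof.
apply: (big_ind (fun x => 625 * x <= 24 * 'C(n, 5) + 100 * n ^ 4)%N) => //.
- by move=> x y x_le y_le; rewrite mulnC maxnMl !(mulnC _ 625) geq_max x_le.
- by move=> g /andP[g_simple g_tf]; apply: C5_count_le.
Qed.

Lemma pow5_le_binomial5 n : (8 <= n)%N -> (n ^ 5 <= 1920 * 'C(n, 5))%N.
Proof.
move=> n_ge8; have [m ->] : exists m, n = (m + 8)%N by exists (n - 8)%N; rewrite subnK.
have := bin_ffact (m + 8) 5.
rewrite (_ : 5`! = 120)%N // !addnS !ffactSS addn0 ffactn0; nia.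
Qed.

Lemma density_bound (R : realFieldType) (x c q m : R) :
  0 < c -> 0 < m -> 0 <= q -> 625 * x <= 24 * c + 100 * q -> m * q <= 1920 * c ->
  x / c <= 24 / 625 + 1920 / m.
Proof.
move=> c_gt0 m_gt0 q_ge0 x_le mq_le.
have q_le : q <= 1920 / m * c by rewrite mulrAC ler_pdivlMr // mulrC.
rewrite ler_pdivrMr // mulrDl.
by move: (1920 / m * c) q_le => y q_le; lra.
Qed.

Lemma ex_C5_K3_ratio_le n : (8 <= n)%N ->
  (ex_C5_K3 n)%:R / ('C(n, 5))%:R <= 24%:R / 625%:R + 1920%:R / n%:R :> rat.
Proof.
move=> n_ge8.
apply: (density_bound _ _ _ (n ^ 4)%:R).
- by rewrite ltr0n bin_gt0 (leq_trans _ n_ge8).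
- by rewrite ltr0n (leq_trans _ n_ge8).
- exact: ler0n.
- by have := ex_C5_K3_le n; rewrite -(ler_nat rat) natrD !natrM.
- by have := pow5_le_binomial5 n n_ge8; rewrite -(ler_nat rat) expnS !natrM.
Qed.

Theorem theorem1 :
  forall eps : rat, 0 < eps ->
  exists N : nat, forall n : nat, (N <= n)%N ->
    (ex_C5_K3 n)%:R / ('C(n, 5))%:R <= 24%:R / 625%:R + eps.
Proof.
move=> eps eps_gt0; exists (maxn 8 (Num.bound (1920%:R / eps))) => n.
rewrite geq_max => /andP[n_ge8 n_ge_bound].
apply: le_trans (ex_C5_K3_ratio_le n n_ge8) _; rewrite lerD2l.
have n_gt0 : 0 < n%:R :> rat by rewrite ltr0n (leq_trans _ n_ge8).
have : 1920%:R / eps < n%:R.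
  apply: lt_le_trans (archi_boundP _) _; last by rewrite ler_nat.
  by rewrite divr_ge0 ?ler0n ?ltW.
by rewrite (ltr_pdivrMr _ _ eps_gt0) (ler_pdivrMr _ _ n_gt0) mulrC => /ltW.
Qed.
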